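(* Let $\mathcal{T}$ be a planar triangulation, $m\in\mathbb{Z}_{\ge0}$, $r\in\mathbb{Z}_{\ge-1}$, and $\mathbf r$ the smoothness distribution with $\mathbf r(\tau)=r$ on interior edges, such that $\mathcal{Q}^{\mathbf r}$ is lower-acyclic. If every interior vertex of $\mathcal{T}$ has at least $r+2$ distinct slopes incident upon it and $m>\frac{3r}{2}$, then for any face $\sigma\in\mathcal{T}_2$, setting the smoothness across every edge of the boundary of $\sigma$ to $-1$ (and keeping $\mathbf r$ on all other interior edges) yields a smoothness distribution $\mathbf s$ for which $\mathcal{Q}^{\mathbf s}$ is lower-acyclic. In particular: (A) if $m\ge2$, $r=1$, and every interior vertex has edges with at least $3$ distinct slopes incident upon it, this holds; (B) if $m\ge4$, $r=2$, and every interior vertex has edges with at least $4$ distinct slopes incident upon it, this holds.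
   Context: $\mathcal{T}$ is a finite planar triangulation of a closed polygonal region $\Omega\subset\mathbb{R}^2$ (possibly not simply connected). An edge or vertex is interior if not contained in $\partial\Omega$; $\mathcal{T}^\circ_1,\mathcal{T}^\circ_0$ denote interior edges and vertices, $\mathcal{T}_2$ the faces. The number of distinct slopes at a vertex is the number of distinct directions among the edges containing it. ${\mathcal{P}}_m$ is the space of real bivariate polynomials of total degree at most $m$; $\langle f\rangle$ is the subspace of ${\mathcal{P}}_m$ of polynomial multiples of $f$ lying in ${\mathcal{P}}_m$. A smoothness distribution is a map $\mathbf{r}:\mathcal{T}^\circ_1\to\mathbb{Z}_{\ge -1}$. For $\tau\in\mathcal{T}^\circ_1$ with vanishing affine-linear form $\ell_\tau$, $\mathfrak{J}^{\mathbf r}_\tau=\langle \ell_\tau^{\mathbf r(\tau)+1}\rangle$ (equal to ${\mathcal{P}}_m$ if $\mathbf r(\tau)=-1$); for $\gamma\in\mathcal{T}^\circ_0$, $\mathfrak{J}^{\mathbf r}_\gamma=\sum_{\tau\ni\gamma}\mathfrak{J}^{\mathbf r}_\tau$. $\mathcal{C}$ is the chain complex $\bigoplus_{\sigma\in\mathcal{T}_2}{\mathcal{P}}_m\to\bigoplus_{\tau\in\mathcal{T}^\circ_1}{\mathcal{P}}_m\to\bigoplus_{\gamma\in\mathcal{T}^\circ_0}{\mathcal{P}}_m$ (degrees $2,1,0$) with cellular boundary maps of $\mathcal{T}$ relative to $\partial\Omega$ (signs $\pm1$ from fixed orientations); $\mathcal{I}^{\mathbf r}$ is the subcomplex $0\to\bigoplus_\tau\mathfrak{J}^{\mathbf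 r}_\tau\to\bigoplus_\gamma\mathfrak{J}^{\mathbf r}_\gamma$; $\mathcal{Q}^{\mathbf r}=\mathcal{C}/\mathcal{I}^{\mathbf r}$, with $H_2(\mathcal{Q}^{\mathbf r})$ the space of piecewise polynomials in ${\mathcal{P}}_m$ that are $C^{\mathbf r(\tau)}$ across each interior edge $\tau$. $\mathcal{Q}^{\mathbf r}$ is lower-acyclic if $H_1(\mathcal{Q}^{\mathbf r})=H_0(\mathcal{Q}^{\mathbf r})=0$. *)

From HB Require Import structures.
From mathcomp Require Import all_boot all_order all_algebra.
From mathcomp Require Import reals.
From mathcomp Require Import mpoly.

Set Implicit Arguments.
Unset Strict Implicit.
Unset Printing Implicit Defensive.
Import Order.TTheory GRing.Theory Num.Theory.
Local Open Scope ring_scope.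

(* A planar triangulation is given by n vertices 'I_n with positions
   pt : 'I_n -> R * R and a set F of faces (3-element vertex sets). *)
Section Triangulation.
Variables (R : realType) (n : nat) (pt : 'I_n -> R * R) (F : {set {set 'I_n}}).

Definition det2 (u v : R * R) : R := u.1 * v.2 - u.2 * v.1.
Definition vsub (a b : R * R) : R * R := (a.1 - b.1, a.2 - b.2).

(* x lies in the convex hull of the points pt i, i \in S (empty if S = set0) *)
Definition in_hull (S : {set 'I_n}) (x : R * R) : Prop :=
  exists w : 'I_n -> R,
    [/\ forall i, 0 <= w i,
        forall i, i \notin S -> w i = 0,
        \sum_i w i = 1
      & x = (\sum_i w i * (pt i).1, \sum_i w i * (pt i).2)].

(* Geometric (planar) triangulation: nondegenerate triangles, any two
   triangles meet exactly in the hull of their common vertices (a common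
   face or the empty set), and every vertex belongs to some triangle. *)
Definition is_triangulation : Prop :=
  [/\ forall s, s \in F -> #|s| = 3%N /\
        (forall a b c, s = [set a; b; c] ->
           det2 (vsub (pt b) (pt a)) (vsub (pt c) (pt a)) != 0),
      forall s t, s \in F -> t \in F -> forall x,
        (in_hull s x /\ in_hull t x) <-> in_hull (s :&: t) x
    & forall v, exists2 s, s \in F & v \in s].

Definition faces_of (e : {set 'I_n}) : {set {set 'I_n}} :=
  [set s in F | e \subset s].

Definition is_edge (e : {set 'I_n}) : bool :=
  (#|e| == 2%N) && (0 < #|faces_of e|)%N.
(* An edge lies in the boundary of Omega iff it lies in exactly one triangle. *)
Definition boundary_edge (e : {set 'I_n}) : bool :=
  (#|e| == 2%N) && (#|faces_of e| == 1%N).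
Definition interior_edge (e : {set 'I_n}) : bool :=
  (#|e| == 2%N) && (#|faces_of e| == 2%N).
(* A vertex lies in the boundary of Omega iff it lies on a boundary edge. *)
Definition interior_vertex (v : 'I_n) : bool :=
  [forall e : {set 'I_n}, (v \in e) ==> ~~ boundary_edge e].

(* slope of the segment from pt v to pt w (None = vertical) *)
Definition slope (v w : 'I_n) : option R :=
  let dx := (pt w).1 - (pt v).1 in
  if dx == 0 then None else Some (((pt w).2 - (pt v).2) / dx).

Definition nslopes (v : 'I_n) : nat :=
  size (undup [seq slope v w | w <- enum 'I_n & is_edge [set v; w]]).

(* bivariate polynomials; P_m = polynomials of total degree <= m *)
Definition poly2 := {mpoly R[2]}.
Definition inPm (m : nat) (p : poly2) : Prop := (msize p <= m.+1)%N.

(* vanishing affine-linear form of the line through the two vertices of e *)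
Definition ell (e : {set 'I_n}) : poly2 :=
  if enum e is [:: a; b] then
    let a1 := (pt a).1 in let a2 := (pt a).2 in
    let b1 := (pt b).1 in let b2 := (pt b).2 in
    (b2 - a2) *: 'X_ord0 - (b1 - a1) *: 'X_(inord 1)
      + ((b1 - a1) * a2 - (b2 - a2) * a1)%:MP
  else 0.

(* smoothness distribution: values on (interior) edges *)
Definition smoothness := {set 'I_n} -> int.

(* J_tau = < ell_tau ^ (r(tau)+1) > inside P_m *)
Definition Jedge (m : nat) (rr : smoothness) (e : {set 'I_n}) (p : poly2) : Prop :=
  inPm m p /\ exists q : poly2, p = ell e ^+ (absz (rr e + 1)) * q.

(* J_gamma = sum of J_tau over interior edges tau containing gamma *)
Definition Jvert (m : nat) (rr : smoothness) (v : 'I_n) (p : poly2) : Prop :=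
  inPm m p /\ exists f : {set 'I_n} -> poly2,
    (forall e, interior_edge e -> v \in e -> Jedge m rr e (f e)) /\
    p = \sum_(e : {set 'I_n} | interior_edge e && (v \in e)) f e.

(* incidence number [S : T] of the simplicial boundary map, for vertex sets
   ordered by the order of 'I_n: d[v0..vk] = sum_i (-1)^i [v0..^vi..vk] *)
Definition incid (S T : {set 'I_n}) : poly2 :=
  \sum_(w in S | S :\ w == T) (-1) ^+ #|[set u in S | (u < w)%N]|.

(* cellular boundary maps of T relative to the boundary of Omega *)
Definition bd1 (c : {set 'I_n} -> poly2) (v : 'I_n) : poly2 :=
  \sum_(e : {set 'I_n} | interior_edge e) incid e [set v] * c e.
Definition bd2 (d : {set 'I_n} -> poly2) (e : {set 'I_n}) : poly2 :=
  \sum_(s in F) incid s e * d s.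

Definition H0_vanishes (m : nat) (rr : smoothness) : Prop :=
  forall g : 'I_n -> poly2, (forall v, interior_vertex v -> inPm m (g v)) ->
  exists c : {set 'I_n} -> poly2,
    (forall e, interior_edge e -> inPm m (c e)) /\
    (forall v, interior_vertex v -> Jvert m rr v (g v - bd1 c v)).

Definition H1_vanishes (m : nat) (rr : smoothness) : Prop :=
  forall c : {set 'I_n} -> poly2,
    (forall e, interior_edge e -> inPm m (c e)) ->
    (forall v, interior_vertex v -> Jvert m rr v (bd1 c v)) ->
  exists d : {set 'I_n} -> poly2,
    (forall s, s \in F -> inPm m (d s)) /\
    (forall e, interior_edge e -> Jedge m rr e (c e - bd2 d e)).

Definition lower_acyclic (m : nat) (rr : smoothness) : Prop :=
  H1_vanishes m rr /\ H0_vanishes m rr.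

Definition drop_face (r : int) (s : {set 'I_n}) : smoothness :=
  fun e => if e \subset s then -1 else r.

End Triangulation.

(* Lowering the smoothness on the edges of a face sigma only enlarges the ideals J,
   so H_0 stays zero.  For H_1, a cycle c for the new distribution becomes a cycle
   for the uniform one after adding a chain h supported on two edges xy, xz of sigma;
   the ideals of the edges of sigma being all of P_m, H_1(Q^r) = 0 then applies.
   Such an h prescribes the boundary at y and z to any uy, uz and moves the
   discrepancy to x.  This suffices if x is a boundary vertex, and otherwise because
   P_m = J_a + J_b + J_c for the vertices a, b, c of sigma.

   For the latter, P_m is spanned by the products La^i Lb^j Lc^l, i + j + l = m, of
   the barycentric forms of sigma.  As 3 (r + 1) < 2 m + 3, the two forms vanishing
   at some vertex, say a, have total exponent at least s = r + 1, so it suffices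
   that Lab^(s-k) Lac^k P_(m-s) lies in J_a.  The r + 2 slopes at a give s values
   of t for which Lab + t Lac is proportional to the form of an edge at a, whose
   s-th power lies in J_a, and Vandermonde interpolation in t separates the terms
   of the binomial expansion. *)

From HB Require Import structures.
From mathcomp Require Import all_boot all_order all_algebra.
From mathcomp Require Import reals.
From mathcomp Require Import mpoly.
From mathcomp Require Import ring lra zify.
Import Order.TTheory GRing.Theory Num.Theory.
Local Open Scope ring_scope.
Set Implicit Arguments.
Unset Strict Implicit.
Unset Printing Implicit Defensive.

Section LinClosed.
Variables (K : fieldType) (V : lmodType K).

Definition lin_closed (S : V -> Prop) : Prop :=
  S 0 /\ forall a u v, S u -> S v -> S (a *: u + v).

Lemma vandermonde_dual N (t : 'I_N -> K) : injective t -> forall k : 'I_N,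
  exists kap : 'I_N -> K, forall i : 'I_N, \sum_j kap j * t j ^+ i = (i == k)%:R.
Proof.
move=> t_inj k; pose W : 'M[K]_N := Vandermonde N (\row_j t j).
have W_unit : W \in unitmx.
  rewrite unitmxE unitfE det_Vandermonde; apply/prodf_neq0 => i _.
  apply/prodf_neq0 => j ij; rewrite !mxE subr_eq0; apply/eqP => /t_inj eij.
  by move: ij; rewrite eij ltnn.
exists (fun j => (invmx W *m delta_mx k (0 : 'I_1)) j 0) => i.
have : (W *m (invmx W *m delta_mx k (0 : 'I_1))) i 0 = delta_mx k (0 : 'I_1) i 0 :> K.
  by rewrite mulmxA mulmxV // mul1mx.
rewrite !mxE eqxx andbT => <-.
by apply: eq_bigr => j _; rewrite !mxE mulrC.
Qed.

Variables (S : V -> Prop) (linS : lin_closed S).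

Lemma lin_closed0 : S 0.
Proof. by case: linS. Qed.

Lemma lin_closedD u v : S u -> S v -> S (u + v).
Proof. by case: linS => _ h Su Sv; rewrite -[u]scale1r; apply: h. Qed.

Lemma lin_closedZ a u : S u -> S (a *: u).
Proof. by case: linS => S0 h Su; rewrite -[_ *: _]addr0; apply: h. Qed.

Lemma lin_closedN u : S u -> S (- u).
Proof. by move=> Su; rewrite -scaleN1r; apply: lin_closedZ. Qed.

Lemma lin_closedB u v : S u -> S v -> S (u - v).
Proof. by move=> Su Sv; apply: lin_closedD => //; apply: lin_closedN. Qed.

Lemma lin_closed_sum (I : Type) (r : seq I) (P : pred I) (f : I -> V) :
  (forall i, P i -> S (f i)) -> S (\sum_(i <- r | P i) f i).
Proof. by move=> Sf; apply: big_ind => //; [exact: lin_closed0 | exact: lin_closedD]. Qed.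


Lemma lin_closed_coef N (t : 'I_N -> K) (c : 'I_N -> V) : injective t ->
  (forall j, S (\sum_(i < N) t j ^+ i *: c i)) -> forall k, S (c k).
Proof.
move=> t_inj St k; have [kap kapE] := vandermonde_dual t_inj k.
suff -> : c k = \sum_j kap j *: \sum_(i < N) t j ^+ i *: c i.
  by apply: lin_closed_sum => j _; apply: lin_closedZ.
under eq_bigr do rewrite scaler_sumr.
rewrite exchange_big (bigD1 k) //= [X in _ + X]big1 => [|i ik].
  by rewrite addr0; under eq_bigr do rewrite scalerA; rewrite -scaler_suml kapE eqxx scale1r.
by under eq_bigr do rewrite scalerA; rewrite -scaler_suml kapE (negbTE ik) scale0r.
Qed.

End LinClosed.

Section Degree.
Variable R : realType.
Implicit Types p q : poly2 R.

Lemma inPm0 m : inPm m (0 : poly2 R).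
Proof. by rewrite /inPm msize0. Qed.

Lemma inPmD m p q : inPm m p -> inPm m q -> inPm m (p + q).
Proof.
rewrite /inPm => hp hq; apply: leq_trans (msizeD_le _ _) _.
by rewrite geq_max hp hq.
Qed.

Lemma inPmZ m c p : inPm m p -> inPm m (c *: p).
Proof. by rewrite /inPm => hp; apply: leq_trans (msizeZ_le _ _) hp. Qed.

Lemma inPmN m p : inPm m p -> inPm m (- p).
Proof. by rewrite /inPm msizeN. Qed.

Lemma inPmB m p q : inPm m p -> inPm m q -> inPm m (p - q).
Proof. by move=> hp hq; apply: inPmD => //; apply: inPmN. Qed.

Lemma inPmW k l p : (k <= l)%N -> inPm k p -> inPm l p.
Proof. by rewrite /inPm => hkl hp; apply: leq_trans hp _. Qed.

Lemma inPmM k l p q : inPm k p -> inPm l q -> inPm (k + l) (p * q).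
Proof.
rewrite /inPm => hp hq.
have [->|p0] := eqVneq p 0; first by rewrite mul0r msize0.
have [->|q0] := eqVneq q 0; first by rewrite mulr0 msize0.
rewrite msizeM //.
have : (0 < msize p)%N by rewrite lt0n msize_poly_eq0.
have : (0 < msize q)%N by rewrite lt0n msize_poly_eq0.
by move: hp hq; case: (msize p) => // a; case: (msize q) => // b; rewrite addSn /=; lia.
Qed.

Lemma inPmC c : inPm 0 (c%:MP : poly2 R).
Proof. by rewrite /inPm msizeC; case: (c != 0). Qed.

Lemma inPmX (i : 'I_2) : inPm 1 ('X_i : poly2 R).
Proof. by rewrite /inPm msizeX mdeg1. Qed.

Lemma inPmXn k j p : inPm k p -> inPm (k * j) (p ^+ j).
Proof.
move=> hp; elim: j => [|j ih]; first by rewrite expr0 muln0 -mpolyC1; exact: inPmC.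
by rewrite exprS mulnS; apply: inPmM.
Qed.

End Degree.

Section Ideals.
Variables (R : realType) (n : nat) (pt : 'I_n -> R * R) (F : {set {set 'I_n}}).
Variables (m : nat) (rr : smoothness n).

Lemma Jedge_lin_closed e : lin_closed (Jedge pt m rr e).
Proof.
split; first by split; [exact: inPm0 | exists 0; rewrite mulr0].
move=> a p q [hp [p' pE]] [hq [q' qE]]; split.
  by apply: inPmD => //; apply: inPmZ.
by exists (a *: p' + q'); rewrite pE qE mulrDr scalerAr.
Qed.

Lemma Jvert_lin_closed v : lin_closed (Jvert pt F m rr v).
Proof.
split.
  split; first exact: inPm0.
  exists (fun _ => 0); split; first by move=> e _ _; exact: lin_closed0 (Jedge_lin_closed e).
  by rewrite big1.
move=> a p q [hp [f [hf pE]]] [hq [g [hg qE]]]; split.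
  by apply: inPmD => //; apply: inPmZ.
exists (fun e => a *: f e + g e); split; last by rewrite pE qE big_split scaler_sumr.
by move=> e he ve; case: (Jedge_lin_closed e) => _; apply; [apply: hf | apply: hg].
Qed.

Lemma Jvert_of_Jedge v e p : interior_edge F e -> v \in e -> Jedge pt m rr e p ->
  Jvert pt F m rr v p.
Proof.
move=> ie ve hp; split; first by case: hp.
exists (fun e' => if e' == e then p else 0); split.
  by move=> e' _ _; case: eqP => [->|_] //; exact: lin_closed0 (Jedge_lin_closed e').
rewrite (bigD1 e) /=; last by rewrite ie ve.
by rewrite eqxx big1 ?addr0 // => e' /andP[_ /negbTE ->].
Qed.

End Ideals.

Lemma sum_dirac (T : finType) (R : pzSemiRingType) (a : T) (f : T -> R) :
  \sum_i (i == a)%:R * f i = f a.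
Proof.
rewrite (bigD1 a) //= eqxx mul1r big1 ?addr0 // => i /negbTE ->.
by rewrite mul0r.
Qed.

Lemma set3_rot (T : finType) (a b c : T) : [set b; c; a] = [set a; b; c].
Proof. by apply/setP => x; rewrite !inE orbC orbA. Qed.

Lemma card_set3_gt2 (T : finType) (a b c : T) : a != b -> a != c -> b != c ->
  (2 < #|[set a; b; c]|)%N.
Proof.
move=> ab ac bc; apply/card_gt2P; exists a, b, c.
by split; [rewrite !inE !eqxx ?orbT | rewrite ab bc eq_sym ac].
Qed.

Section Triangulation.
Variables (R : realType) (n : nat) (pt : 'I_n -> R * R) (F : {set {set 'I_n}}).

Local Notation D a b c := (det2 (vsub (pt b) (pt a)) (vsub (pt c) (pt a))).

Lemma in_hull2_collinear (a b : 'I_n) x : a != b -> in_hull pt [set a; b] x ->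
  det2 (vsub (pt b) (pt a)) (vsub x (pt a)) = 0.
Proof.
move=> ab [w [_ wS w1 ->]].
have sum_ab f : \sum_i w i * f i = w a * f a + w b * f b.
  rewrite (bigID (mem [set a; b])) /= [X in _ + X]big1 => [|i /wS ->]; last by rewrite mul0r.
  by rewrite addr0 big_setU1 /= ?big_set1 // inE.
have wb : w a = 1 - w b.
  by move: w1; rewrite -(eq_bigr _ (fun i _ => mulr1 (w i))) sum_ab !mulr1 => <-; ring.
by rewrite /det2 /vsub /= !sum_ab wb; ring.
Qed.

Lemma in_hull3 (a b c : 'I_n) (al be ga : R) x :
  a != b -> a != c -> b != c -> 0 <= al -> 0 <= be -> 0 <= ga -> al + be + ga = 1 ->
  x.1 = al * (pt a).1 + be * (pt b).1 + ga * (pt c).1 ->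
  x.2 = al * (pt a).2 + be * (pt b).2 + ga * (pt c).2 ->
  in_hull pt [set a; b; c] x.
Proof.
move=> ab ac bc al0 be0 ga0 hs; case: x => x1 x2 /= -> ->.
pose w i := (i == a)%:R * al + (i == b)%:R * be + (i == c)%:R * ga.
have sum_w f : \sum_i w i * f i = al * f a + be * f b + ga * f c.
  under eq_bigr do rewrite !mulrDl -!mulrA.
  by rewrite !big_split /= !sum_dirac.
exists w; split.
- by move=> i; rewrite /w !addr_ge0 // mulr_ge0 // ler0n.
- move=> i; rewrite /w !inE => /norP [/norP [/negbTE -> /negbTE ->] /negbTE ->].
  by rewrite !mul0r !addr0.
- by rewrite -(eq_bigr _ (fun i _ => mulr1 (w i))) sum_w !mulr1.
- by rewrite !sum_w.
Qed.

(* Write c1 - a = p (b - a) + q (c2 - a), where q > 0 as c1 and c2 lie on the same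
   side of ab.  For small eps the point a + (1 - eps)/2 (b - a) + eps (c1 - a) then
   has nonnegative barycentric coordinates in both triangles. *)
Lemma same_side_common_point (a b c1 c2 : 'I_n) :
  a != b -> c1 != a -> c1 != b -> c2 != a -> c2 != b -> 0 < D a b c1 * D a b c2 ->
  exists2 x, in_hull pt [set a; b; c1] x /\ in_hull pt [set a; b; c2] x &
    det2 (vsub (pt b) (pt a)) (vsub x (pt a)) != 0.
Proof.
move=> ab c1a c1b c2a c2b; set D1 := D a b c1; set D2 := D a b c2 => D12.
have D2n0 : D2 != 0 by apply: contraTneq D12 => ->; rewrite mulr0 ltxx.
have D1n0 : D1 != 0 by apply: contraTneq D12 => ->; rewrite mul0r ltxx.
set p := D a c1 c2 / D2; set q := D1 / D2.
have q0 : 0 < q.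
  have : 0 < D2 * D2 by rewrite -expr2 exprn_even_gt0.
  have : q * D2 = D1 by rewrite /q divfK.
  by rewrite -/D1; nra.
set K := 1 + `|p| + q.
have K0 : 0 < K by rewrite /K; have := normr_ge0 p; lra.
set eps := 1 / (4 * K).
have epsK : eps * K = 1 / 4 by rewrite /eps; field; rewrite gt_eqF.
have eps0 : 0 < eps by rewrite /eps divr_gt0 // mulr_gt0.
have /andP [p_lb p_ub] : - `|p| <= p <= `|p| by rewrite -ler_norml.
have : eps * `|p| <= 1/4 /\ eps * q <= 1/4 /\ eps <= 1/4.
  by rewrite /K in epsK; have := normr_ge0 p; split; [|split]; nra.
move=> [e_p [e_q e1]].
set al := (1 - eps) / 2.
pose x := ((pt a).1 + al * (vsub (pt b) (pt a)).1 + eps * (vsub (pt c1) (pt a)).1,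
            (pt a).2 + al * (vsub (pt b) (pt a)).2 + eps * (vsub (pt c1) (pt a)).2).
exists x.
  rewrite !(eq_sym c1) !(eq_sym c2) in c1a c1b c2a c2b; split.
    by apply: (in_hull3 (al := al) (be := al) (ga := eps)) => //=; rewrite /x /al /vsub; lra.
  apply: (in_hull3 (al := 1 - (al + eps * p) - eps * q) (be := al + eps * p) (ga := eps * q))
    => //=; rewrite /al; try nra;
  by rewrite /x /vsub /p /q /D1 /D2 /det2 /=; field.
have -> : det2 (vsub (pt b) (pt a)) (vsub x (pt a)) = eps * D1.
  by rewrite /x /D1 /det2 /vsub /=; ring.
by rewrite mulf_neq0 // gt_eqF.
Qed.

Hypothesis tri : is_triangulation pt F.

Lemma face_card s : s \in F -> #|s| = 3%N.
Proof. by case: tri => h _ _ /h []. Qed.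

Lemma face_nondeg (a b c : 'I_n) : [set a; b; c] \in F -> D a b c != 0.
Proof. by case: tri => h _ _ /h [_ ->]. Qed.

Lemma face_set3 s : s \in F ->
  exists a b c, [/\ a != b, a != c, b != c & s = [set a; b; c]].
Proof.
move=> sF; have /card_gt2P [a [b [c [[ha hb hc] [ab bc ca]]]]] : (2 < #|s|)%N.
  by rewrite face_card.
have ac : a != c by rewrite eq_sym.
exists a, b, c; split => //.
apply/eqP; rewrite eq_sym eqEcard face_card // card_set3_gt2 // andbT.
by apply/subsetP => u; rewrite !inE => /orP [/orP [] | ] /eqP ->.
Qed.

Lemma face_third_vertex (a b : 'I_n) t : t \in F -> a != b -> [set a; b] \subset t ->
  exists c, [/\ c != a, c != b & t = [set a; b; c]].
Proof.
move=> tF ab sub.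
have /subsetPn [c ct] : ~~ (t \subset [set a; b]).
  by apply/negP => /subset_leq_card; rewrite face_card // cards2 ab.
rewrite !inE => /norP [ca cb]; exists c; split => //.
apply/eqP; rewrite eq_sym eqEcard face_card // card_set3_gt2 ?andbT // 1?eq_sym //.
by rewrite subUset sub1set ct sub.
Qed.

Lemma coedge_faces_not_same_side (a b c1 c2 : 'I_n) :
  [set a; b; c1] \in F -> [set a; b; c2] \in F ->
  a != b -> c1 != a -> c1 != b -> c2 != a -> c2 != b -> c1 != c2 ->
  ~ 0 < D a b c1 * D a b c2.
Proof.
move=> t1F t2F ab c1a c1b c2a c2b c12 /(same_side_common_point ab c1a c1b c2a c2b).
case=> x hx; apply/negP; rewrite negbK.
have [_ hull _] := tri.
have := (hull _ _ t1F t2F x).1 hx.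
have -> : [set a; b; c1] :&: [set a; b; c2] = [set a; b].
  apply/setP => y; rewrite !inE.
  have [->|ya] := eqVneq y a; first by [].
  have [->|yb] := eqVneq y b; first by rewrite !orbT.
  by rewrite /=; apply/andP => -[/eqP y1 /eqP y2]; move: c12; rewrite -y1 -y2 eqxx.
by move/(in_hull2_collinear ab) ->.
Qed.

Lemma edge_faces_le2 (e : {set 'I_n}) : #|e| = 2%N -> (#|faces_of F e| <= 2)%N.
Proof.
move=> /eqP /cards2P [a [b [ab ->]]].
rewrite leqNgt; apply/negP => /card_gt2P [t1 [t2 [t3 [[h1 h2 h3] [n12 n23 n31]]]]].
move: h1 h2 h3; rewrite !inE => /andP [t1F s1] /andP [t2F s2] /andP [t3F s3].
have [c1 [c1a c1b et1]] := face_third_vertex t1F ab s1.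
have [c2 [c2a c2b et2]] := face_third_vertex t2F ab s2.
have [c3 [c3a c3b et3]] := face_third_vertex t3F ab s3.
subst t1 t2 t3.
have c12 : c1 != c2 by apply: contraNneq n12 => ->.
have c23 : c2 != c3 by apply: contraNneq n23 => ->.
have c13 : c1 != c3 by apply: contraNneq n31 => ->.
have P12 := coedge_faces_not_same_side t1F t2F ab c1a c1b c2a c2b c12.
have P23 := coedge_faces_not_same_side t2F t3F ab c2a c2b c3a c3b c23.
have P13 := coedge_faces_not_same_side t1F t3F ab c1a c1b c3a c3b c13.
have := face_nondeg t1F; have := face_nondeg t2F; have := face_nondeg t3F.
move: P12 P23 P13; set d1 := D a b c1; set d2 := D a b c2; set d3 := D a b c3.
move=> P12 P23 P13 d3n0 d2n0 d1n0.
(* of three nonzero reals, two have the same sign *)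
have neg_prod (di dj : R) : di != 0 -> dj != 0 -> ~ 0 < di * dj -> di * dj < 0.
  by move=> ? ? ?; rewrite lt_neqAle mulf_neq0 // leNgt; apply/negP.
have d11 : 0 < d1 * d1 by rewrite -expr2 exprn_even_gt0.
apply: P23; rewrite -(pmulr_rgt0 _ d11).
have -> : d1 * d1 * (d2 * d3) = (d1 * d2) * (d1 * d3) by ring.
by rewrite nmulr_rgt0 ?neg_prod.
Qed.

Lemma interior_vertex_edge v (e : {set 'I_n}) : interior_vertex F v -> v \in e ->
  is_edge F e -> interior_edge F e.
Proof.
move=> /forallP /(_ e) iv ve /andP [/eqP c2 f0].
move: iv; rewrite ve /boundary_edge /interior_edge c2 eqxx /= => f1.
by have := edge_faces_le2 c2; move: f0 f1; case: #|faces_of F e| => [|[|[|k]]].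
Qed.

Lemma face_edge_is_edge (s e : {set 'I_n}) : s \in F -> e \subset s -> #|e| = 2%N ->
  is_edge F e.
Proof.
move=> sF es c2; rewrite /is_edge c2 eqxx /=; apply/card_gt0P; exists s.
by rewrite inE sF es.
Qed.

End Triangulation.

Section LineForms.
Variable R : realType.

Definition X0 : poly2 R := 'X_ord0.
Definition X1 : poly2 R := 'X_(inord 1).

Definition line_form (u v : R * R) : poly2 R :=
  (v.2 - u.2)%:MP * X0 - (v.1 - u.1)%:MP * X1
  + ((v.1 - u.1) * u.2 - (v.2 - u.2) * u.1)%:MP.

Lemma line_form_sym u v : line_form v u = - line_form u v.
Proof. by rewrite /line_form; ring. Qed.

Lemma inPm_line_form u v : inPm 1 (line_form u v).
Proof.
have inPm_CX c (i : 'I_2) : inPm 1 (c%:MP * 'X_i : poly2 R).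
  by have := inPmM (inPmC c) (@inPmX R i); rewrite add0n.
rewrite /line_form; apply: inPmD; last by apply: (inPmW (leq0n 1)); exact: inPmC.
by apply: inPmB; apply: inPm_CX.
Qed.

Lemma line_form_bary (a b c : R * R) (al be ga : R) :
  let f u := al + be * u.1 + ga * u.2 in
  (f a)%:MP * line_form b c + (f b)%:MP * line_form c a + (f c)%:MP * line_form a b =
  (det2 (vsub a b) (vsub c b))%:MP * (al%:MP + be%:MP * X0 + ga%:MP * X1).
Proof. by rewrite /line_form /det2 /vsub /=; ring. Qed.

Lemma line_form_pencil (a b c w : R * R) :
  let mu := det2 (vsub w a) (vsub c a) in mu != 0 ->
  line_form a b + (det2 (vsub b a) (vsub w a) / mu) *: line_form a c =
  (det2 (vsub b a) (vsub c a) / mu) *: line_form a w.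
Proof.
set nu := det2 (vsub b a) (vsub w a); set D := det2 (vsub b a) (vsub c a) => mu mu0.
have decomp : mu *: line_form a b + nu *: line_form a c = D *: line_form a w.
  by rewrite -!mul_mpolyC /mu /nu /D /line_form /det2 /vsub /=; ring.
rewrite (mulrC D) -(scalerA mu^-1 D) -decomp (scalerDr mu^-1) !scalerA mulVf // scale1r.
by rewrite (mulrC mu^-1).
Qed.

End LineForms.
Arguments X0 {R}.
Arguments X1 {R}.

Lemma ell_line_form (R : realType) n (pt : 'I_n -> R * R) (i j : 'I_n) : i != j ->
  exists eps : R, line_form (pt i) (pt j) = eps *: ell pt [set i; j].
Proof.
move=> ij; rewrite /ell.
have size_e : size (enum [set i; j]) = 2%N by rewrite -cardE cards2 ij.
have mem_e x : (x \in enum [set i; j]) = (x == i) || (x == j) by rewrite mem_enum !inE.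
case: (enum [set i; j]) size_e (enum_uniq (mem [set i; j])) mem_e => [|x [|y []]] // _.
rewrite /= inE andbT => xy mem_e; rewrite -!mul_mpolyC -/(line_form (pt x) (pt y)).
have : (x == i) || (x == j) by rewrite -mem_e inE eqxx.
have : (y == i) || (y == j) by rewrite -mem_e !inE eqxx orbT.
move=> /orP [] /eqP ey /orP [] /eqP ex; subst x y; try by rewrite eqxx in xy.
- by exists (-1); rewrite scaleN1r line_form_sym.
- by exists 1; rewrite scale1r.
Qed.

Section DistinctValues.
Variables (T U V : eqType).

Lemma size_undup_map_filter (f : T -> U) (P : pred T) l :
  (size (undup (map f l)) <=
   size (undup (map f (filter P l))) + size (undup (map f (filter (predC P) l))))%N.
Proof.
rewrite -size_cat; apply: uniq_leq_size; first exact: undup_uniq.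
move=> y; rewrite mem_undup mem_cat !mem_undup => /mapP [x xl ->].
by case Px: (P x); [apply/orP; left | apply/orP; right];
  apply: map_f; rewrite mem_filter ?Px //= Px.
Qed.

Lemma size_undup_map_const (f : T -> U) l y0 : {in l, forall x, f x = y0} ->
  (size (undup (map f l)) <= 1)%N.
Proof.
move=> h; apply: (@uniq_leq_size _ _ [:: y0]); first exact: undup_uniq.
by move=> y; rewrite mem_undup => /mapP [x xl ->]; rewrite h // inE.
Qed.

Lemma size_undup_map_le (f : T -> U) (g : T -> V) l :
  {in l &, forall x y, g x = g y -> f x = f y} ->
  (size (undup (map f l)) <= size (undup (map g l)))%N.
Proof.
elim: l => [|x l ih] h //=.
have ih' : (size (undup (map f l)) <= size (undup (map g l)))%N.
  by apply: ih => u v ul vl; apply: h; rewrite inE ?ul ?vl orbT.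
case: ifP => fx; first by apply: leq_trans ih' _; case: ifP => //= _; apply: leqnSn.
case: ifP => gx /=; last by rewrite ltnS.
move/mapP: gx => [y yl gxy]; move: fx; rewrite (h x y) ?inE ?eqxx ?yl ?orbT //.
by rewrite map_f.
Qed.

End DistinctValues.

Lemma slope_code_eq (R : realType) (x y x' y' : R) :
  (x != 0) || (y != 0) -> (x' != 0) || (y' != 0) -> x * y' - y * x' = 0 ->
  (if x == 0 then None else Some (y / x)) = (if x' == 0 then None else Some (y' / x')).
Proof.
move=> h h' /eqP; rewrite subr_eq0 => /eqP e.
have [x0|x0] := eqVneq x 0.
  move: h; rewrite x0 eqxx /= => y0; have [//|x'0] := eqVneq x' 0.
  by move/eqP: e; rewrite x0 mul0r eq_sym mulf_eq0 (negbTE y0) (negbTE x'0).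
have [x'0|x'0] := eqVneq x' 0.
  move: h'; rewrite x'0 eqxx /= => y'0.
  by move/eqP: e; rewrite x'0 mulr0 mulf_eq0 (negbTE y'0) (negbTE x0).
by congr Some; apply/eqP; rewrite eqr_div // -e mulrC.
Qed.

Section Pencil.
Variables (R : realType) (n : nat) (pt : 'I_n -> R * R) (F : {set {set 'I_n}}).
Hypothesis tri : is_triangulation pt F.

Local Notation D a b c := (det2 (vsub (pt b) (pt a)) (vsub (pt c) (pt a))).

Lemma is_edge_neq a w : is_edge F [set a; w] -> a != w.
Proof. by case/andP; rewrite cards2; case: (a != w). Qed.

Lemma edge_vector_neq0 a w : is_edge F [set a; w] ->
  ((pt w).1 - (pt a).1 != 0) || ((pt w).2 - (pt a).2 != 0).
Proof.
move=> ew; case/andP: (ew) => _ /card_gt0P [t]; rewrite inE => /andP [tF sub].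
have [c [_ _ et]] := face_third_vertex tri tF (is_edge_neq ew) sub.
move: tF; rewrite et => /(face_nondeg tri); rewrite -negb_and; apply: contra.
by case/andP => /eqP h1 /eqP h2; rewrite /det2 /vsub /= h1 h2 !mul0r subrr.
Qed.

Lemma slope_eq_collinear a w w' : is_edge F [set a; w] -> is_edge F [set a; w'] ->
  D a w w' = 0 -> slope pt a w = slope pt a w'.
Proof.
move=> ew ew' e; apply: slope_code_eq; [exact: edge_vector_neq0 ew|exact: edge_vector_neq0 ew'|].
by move: e; rewrite /det2 /vsub.
Qed.

(* Each edge aw not parallel to ac yields such a t (by [line_form_pencil]), and
   edges of distinct slopes yield distinct t; only the slope of ac is lost. *)
Lemma pencil_nodes (a b c : 'I_n) s : [set a; b; c] \in F -> a != b -> a != c -> b != c ->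
  (s.+1 <= nslopes pt F a)%N ->
  exists ts : seq R, [/\ uniq ts, (s <= size ts)%N &
    forall t, t \in ts -> exists w k, is_edge F [set a; w] /\
      line_form (pt a) (pt b) + t *: line_form (pt a) (pt c) = k *: line_form (pt a) (pt w)].
Proof.
move=> sF ab ac bc hs.
set K := [seq w <- enum 'I_n | is_edge F [set a; w]].
pose P w := D a w c != 0.
pose tw w := D a b w / D a w c.
exists (undup (map tw (filter P K))); split; first exact: undup_uniq; last first.
  move=> t; rewrite mem_undup => /mapP [w]; rewrite !mem_filter => /andP [Pw /andP [ew _]] ->.
  by exists w, (D a b c / D a w c); split; last exact: line_form_pencil.
have ec : is_edge F [set a; c].
  by apply: (face_edge_is_edge sF); rewrite ?cards2 ?ac // subUset !sub1set !inE !eqxx ?orbT.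
have Dbc := face_nondeg tri sF.
have parallel_c : (size (undup (map (slope pt a) (filter (predC P) K))) <= 1)%N.
  apply: (size_undup_map_const (y0 := slope pt a c)) => w.
  rewrite !mem_filter /= => /andP [/negPn Pw /andP [ew _]].
  exact: slope_eq_collinear ew ec (eqP Pw).
have transversal : (size (undup (map (slope pt a) (filter P K))) <=
                    size (undup (map tw (filter P K))))%N.
  apply: size_undup_map_le => w w'; rewrite !mem_filter.
  move=> /andP [Pw /andP [ew _]] /andP [Pw' /andP [ew' _]] /eqP.
  rewrite eqr_div // => /eqP e; apply: slope_eq_collinear ew ew' _.
  have pluecker : D a b w * D a w' c - D a b w' * D a w c = - (D a b c * D a w w').
    by rewrite /det2 /vsub; ring.
  by move/eqP: pluecker; rewrite e subrr eq_sym oppr_eq0 mulf_eq0 (negbTE Dbc) => /eqP.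
have := leq_trans hs (leq_trans (size_undup_map_filter (slope pt a) P K)
  (leq_add transversal parallel_c)).
by rewrite addn1 ltnS.
Qed.

End Pencil.

Lemma exprDZn (K : comPzRingType) (A : comAlgType K) (x y : A) (t : K) N :
  (x + t *: y) ^+ N =
  \sum_(i < N) t ^+ i *: (x ^+ (N - i) * y ^+ i *+ 'C(N, i)) + t ^+ N *: y ^+ N.
Proof.
rewrite exprDn big_ord_recr /= subnn expr0 mul1r binn mulr1n exprZn.
by congr (_ + _); apply: eq_bigr => i _; rewrite exprZn -scalerAr scalerMnr.
Qed.

Section VertexFactors.
Variables (R : realType) (n : nat) (pt : 'I_n -> R * R) (F : {set {set 'I_n}}).
Hypothesis tri : is_triangulation pt F.
Variables (m s : nat) (rr : smoothness n).
Hypothesis rr_s : forall e, absz (rr e + 1) = s.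
Hypothesis s_le_m : (s <= m)%N.

Definition Jvert_factor a (p : poly2 R) : Prop :=
  forall q, inPm (m - s) q -> Jvert pt F m rr a (p * q).

Lemma Jvert_factor_lin_closed a : lin_closed (Jvert_factor a).
Proof.
have [J0 JZD] := Jvert_lin_closed pt F m rr a.
split=> [q _|k p p' hp hp' q hq]; first by rewrite mul0r.
by rewrite mulrDl -scalerAl; apply: JZD; [apply: hp | apply: hp'].
Qed.

Lemma Jvert_factor_edge a w : interior_vertex F a -> is_edge F [set a; w] ->
  Jvert_factor a (line_form (pt a) (pt w) ^+ s).
Proof.
move=> ia ew q hq.
have ae : a \in [set a; w] by rewrite !inE eqxx.
apply: (Jvert_of_Jedge (interior_vertex_edge tri ia ae ew) ae); split.
  by have := inPmM (inPmXn s (inPm_line_form (pt a) (pt w))) hq; rewrite mul1n subnKC.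
have [eps ->] := ell_line_form pt (is_edge_neq ew).
by exists (eps ^+ s *: q); rewrite rr_s exprZn -scalerAl scalerAr.
Qed.

(* Interpolation along the pencil line_form a b + t line_form a c through s+1
   edge directions at a separates all the mixed terms of the binomial expansion. *)
Lemma Jvert_factor_mixed (a b c : 'I_n) : [set a; b; c] \in F ->
  a != b -> a != c -> b != c -> interior_vertex F a -> (s.+1 <= nslopes pt F a)%N ->
  forall i, (i <= s)%N ->
  Jvert_factor a (line_form (pt a) (pt b) ^+ (s - i) * line_form (pt a) (pt c) ^+ i).
Proof.
move=> sF ab ac bc ia hsl i; have linS := Jvert_factor_lin_closed a.
set C := line_form (pt a) (pt b); set B := line_form (pt a) (pt c).
have ec : is_edge F [set a; c].
  by apply: (face_edge_is_edge sF); rewrite ?cards2 ?ac // subUset !sub1set !inE !eqxx ?orbT.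
rewrite leq_eqVlt => /orP [/eqP -> | lt_is].
  by rewrite subnn expr0 mul1r; exact: Jvert_factor_edge.
have [ts [uts sts hts]] := pencil_nodes tri sF ab ac bc hsl.
pose t (j : 'I_s) := nth 0 ts j.
have t_ts j : t j \in ts by rewrite mem_nth // (leq_trans (ltn_ord j) sts).
have t_inj : injective t.
  move=> j k /eqP; rewrite nth_uniq ?(leq_trans (ltn_ord _) sts) //.
  by move/eqP/val_inj.
have St j : Jvert_factor a (\sum_(k < s) t j ^+ k *: (C ^+ (s - k) * B ^+ k *+ 'C(s, k))).
  rewrite -[X in Jvert_factor a X](addrK (t j ^+ s *: B ^+ s)) -exprDZn.
  have [w [k [ew ->]]] := hts _ (t_ts j).
  by rewrite exprZn; apply: (lin_closedB linS); apply: (lin_closedZ linS);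
    exact: Jvert_factor_edge.
have := lin_closed_coef linS t_inj St (Ordinal lt_is).
rewrite -scaler_nat => /(lin_closedZ linS ('C(s, i)%:R^-1)).
by rewrite scalerA mulVf ?scale1r // pnatr_eq0 -lt0n bin_gt0 ltnW.
Qed.

Lemma Jvert_bary_monomial (a b c : 'I_n) : [set a; b; c] \in F ->
  a != b -> a != c -> b != c -> interior_vertex F a -> (s.+1 <= nslopes pt F a)%N ->
  forall i j l, (i + j + l)%N = m -> (s <= j + l)%N ->
  Jvert pt F m rr a (line_form (pt b) (pt c) ^+ i * line_form (pt c) (pt a) ^+ j *
                     line_form (pt a) (pt b) ^+ l).
Proof.
move=> sF ab ac bc ia hsl i j l hm hjl.
have [k [j2 [l2 [ks ej el]]]] : exists k j2 l2 : nat, [/\ (k <= s)%N, j = (k + j2)%N & l = (s - k + l2)%N].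
  by exists (minn j s), (j - minn j s)%N, (l - (s - minn j s))%N; split; lia.
subst j l; set Lab := line_form (pt a) (pt b); set Lac := line_form (pt a) (pt c).
set Lbc := line_form (pt b) (pt c).
pose q := Lbc ^+ i * Lac ^+ j2 * Lab ^+ l2.
have hq : inPm (m - s) q.
  apply: (inPmW (k := 1 * i + 1 * j2 + 1 * l2)); first lia.
  by apply: inPmM; [apply: inPmM|]; apply: inPmXn (inPm_line_form _ _).
have := Jvert_factor_mixed sF ab ac bc ia hsl ks hq.
move=> /(lin_closedZ (Jvert_lin_closed pt F m rr a) ((-1) ^+ (k + j2))); congr Jvert.
rewrite -/Lab -/Lac -mul_mpolyC rmorphXn rmorphN1 (line_form_sym (pt a) (pt c)) -/Lac.
by rewrite (exprNn Lac) !exprD /q; ring.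
Qed.

End VertexFactors.

Lemma mpolyX2 (R : realType) (mon : 'X_{1..2}) :
  'X_[mon] = X0 ^+ (mon ord0) * X1 ^+ (mon (inord 1)) :> poly2 R.
Proof.
rewrite mpolyXE_id big_ord_recl big_ord_recl big_ord0 mulr1.
by have -> : lift ord0 (ord0 : 'I_1) = inord 1 by apply: val_inj; rewrite /= inordK.
Qed.

Lemma mdeg2 (mon : 'X_{1..2}) : mdeg mon = (mon ord0 + mon (inord 1))%N.
Proof.
rewrite mdegE big_ord_recl big_ord_recl big_ord0 addn0.
by have -> : lift ord0 (ord0 : 'I_1) = inord 1 by apply: val_inj; rewrite /= inordK.
Qed.

Section FaceIdealSum.
Variables (R : realType) (n : nat) (pt : 'I_n -> R * R) (F : {set {set 'I_n}}).
Hypothesis tri : is_triangulation pt F.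
Variables (m s : nat) (rr : smoothness n).
Hypothesis rr_s : forall e, absz (rr e + 1) = s.
Hypothesis hms : (3 * s < 2 * m + 3)%N.
Variables (a b c : 'I_n).
Hypotheses (sF : [set a; b; c] \in F) (ab : a != b) (ac : a != c) (bc : b != c).
Hypotheses (ia : interior_vertex F a) (ib : interior_vertex F b) (ic : interior_vertex F c).
Hypotheses (sla : (s.+1 <= nslopes pt F a)%N) (slb : (s.+1 <= nslopes pt F b)%N)
  (slc : (s.+1 <= nslopes pt F c)%N).

Local Notation J v := (Jvert pt F m rr v).
Local Notation La := (line_form (pt b) (pt c)).
Local Notation Lb := (line_form (pt c) (pt a)).
Local Notation Lc := (line_form (pt a) (pt b)).

Definition face_ideal_sum (p : poly2 R) : Prop :=
  exists ua ub uc, [/\ J a ua, J b ub, J c uc & p = ua + ub + uc].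

Lemma face_ideal_sum_lin_closed : lin_closed face_ideal_sum.
Proof.
have [Ja0 JaZD] := Jvert_lin_closed pt F m rr a.
have [Jb0 JbZD] := Jvert_lin_closed pt F m rr b.
have [Jc0 JcZD] := Jvert_lin_closed pt F m rr c.
split; first by exists 0, 0, 0; rewrite !addr0.
move=> k p q [ua [ub [uc [Ja Jb Jc ->]]]] [va [vb [vc [Ka Kb Kc ->]]]].
exists (k *: ua + va), (k *: ub + vb), (k *: uc + vc); split; auto.
by rewrite !scalerDr; ring.
Qed.

(* If i + j + l = m then, as 3 s < 2 m + 3, one of j + l, l + i, i + j is at least s. *)
Lemma face_ideal_sum_bary_monomial i j l : (i + j + l)%N = m ->
  face_ideal_sum (La ^+ i * Lb ^+ j * Lc ^+ l).
Proof.
move=> hm; have s_le_m : (s <= m)%N by lia.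
have [Ja0 _] := Jvert_lin_closed pt F m rr a.
have [Jb0 _] := Jvert_lin_closed pt F m rr b.
have [Jc0 _] := Jvert_lin_closed pt F m rr c.
have ba : b != a by rewrite eq_sym.
have ca : c != a by rewrite eq_sym.
have cb : c != b by rewrite eq_sym.
have [hjl|hjl] := leqP s (j + l).
  exists (La ^+ i * Lb ^+ j * Lc ^+ l), 0, 0; rewrite !addr0; split => //.
  exact: Jvert_bary_monomial.
have [hli|hli] := leqP s (l + i).
  exists 0, (La ^+ i * Lb ^+ j * Lc ^+ l), 0; rewrite add0r addr0; split => //.
  have sF' : [set b; c; a] \in F by rewrite set3_rot.
  have hm' : (j + l + i)%N = m by lia.
  have := Jvert_bary_monomial tri rr_s s_le_m sF' bc ba ca ib slb hm' hli.
  by congr Jvert; ring.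
have [hij|hij] := leqP s (i + j); last by lia.
exists 0, 0, (La ^+ i * Lb ^+ j * Lc ^+ l); rewrite !add0r; split => //.
have sF' : [set c; a; b] \in F by rewrite -set3_rot.
have hm' : (l + i + j)%N = m by lia.
have := Jvert_bary_monomial tri rr_s s_le_m sF' ca cb ab ic slc hm' hij.
by congr Jvert; ring.
Qed.

Definition bary_comb (X : poly2 R) : Prop :=
  exists x y z : R, X = x%:MP * La + y%:MP * Lb + z%:MP * Lc.

Lemma bary_comb_affine (al be ga : R) : bary_comb (al%:MP + be%:MP * X0 + ga%:MP * X1).
Proof.
set D := det2 (vsub (pt a) (pt b)) (vsub (pt c) (pt b)).
have D0 : D != 0.
  have -> : D = - det2 (vsub (pt b) (pt a)) (vsub (pt c) (pt a)).
    by rewrite /D /det2 /vsub /=; ring.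
  by rewrite oppr_eq0 (face_nondeg tri sF).
have := line_form_bary (pt a) (pt b) (pt c) al be ga; set f := fun u => _ => h.
exists (D^-1 * f (pt a)), (D^-1 * f (pt b)), (D^-1 * f (pt c)).
apply: (@mulfI _ D%:MP); first by rewrite mpolyC_eq0.
rewrite -{}h; move: La Lb Lc (f (pt a)) (f (pt b)) (f (pt c)) => P Q S x y z.
by rewrite !mulrDr !mulrA -!rmorphM /= !mulrA mulfV // !mul1r.
Qed.

Definition bary_degree k (p : poly2 R) : Prop := forall i j l, (i + j + l + k)%N = m ->
  face_ideal_sum (La ^+ i * Lb ^+ j * Lc ^+ l * p).

Lemma bary_degreeS k p X : bary_comb X -> bary_degree k p -> bary_degree k.+1 (X * p).
Proof.
move=> [x [y [z ->]]] hp i j l hm; have linS := face_ideal_sum_lin_closed.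
have -> : La ^+ i * Lb ^+ j * Lc ^+ l * ((x%:MP * La + y%:MP * Lb + z%:MP * Lc) * p) =
  x *: (La ^+ i.+1 * Lb ^+ j * Lc ^+ l * p) + y *: (La ^+ i * Lb ^+ j.+1 * Lc ^+ l * p)
  + z *: (La ^+ i * Lb ^+ j * Lc ^+ l.+1 * p).
  by rewrite !exprS -!mul_mpolyC; ring.
by do 2?apply: (lin_closedD linS); apply: (lin_closedZ linS); apply: hp; lia.
Qed.

Lemma bary_degree_monomial i j d : bary_degree (i + j + d) (X0 ^+ i * X1 ^+ j).
Proof.
have comb1 : bary_comb 1.
  by have := bary_comb_affine 1 0 0; rewrite mpolyC0 mpolyC1 !mul0r !addr0.
have combX0 : bary_comb X0.
  by have := bary_comb_affine 0 1 0; rewrite mpolyC0 mpolyC1 mul0r mul1r add0r addr0.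
have combX1 : bary_comb X1.
  by have := bary_comb_affine 0 0 1; rewrite mpolyC0 mpolyC1 mul0r mul1r !add0r.
have one_d : bary_degree d 1.
  elim: d => [|d ih]; last by rewrite -[1]mulr1; apply: bary_degreeS.
  by move=> i' j' l' hm; rewrite mulr1; apply: face_ideal_sum_bary_monomial; rewrite -hm addn0.
have X1_jd : bary_degree (j + d) (X1 ^+ j).
  by elim: j => [|j ih]; rewrite ?expr0 // exprS addSn; apply: bary_degreeS.
elim: i => [|i ih]; first by rewrite expr0 mul1r.
by rewrite exprS -mulrA !addSn; apply: bary_degreeS.
Qed.

Lemma Pm_face_ideal_sum p : inPm m p -> face_ideal_sum p.
Proof.
move=> hp; have linS := face_ideal_sum_lin_closed.
rewrite (mpolyE p) big_seq; apply: (lin_closed_sum linS) => mon hmon.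
apply: (lin_closedZ linS); rewrite mpolyX2.
have hdeg : (mon ord0 + mon (inord 1) <= m)%N.
  by rewrite -mdeg2 -ltnS; apply: leq_trans (msize_mdeg_lt hmon) hp.
have := @bary_degree_monomial (mon ord0) (mon (inord 1)) (m - (mon ord0 + mon (inord 1))) 0 0 0.
by rewrite -addnA subnKC // => /(_ (add0n m)); rewrite !expr0 !mul1r.
Qed.

End FaceIdealSum.

Section Incidence.
Variables (R : realType) (n : nat).

Lemma incid2_notin (x y v : 'I_n) : v != x -> v != y -> incid R [set x; y] [set v] = 0.
Proof.
move=> vx vy; rewrite /incid big1 // => w /andP [_ /eqP h].
have : v \in [set x; y] :\ w by rewrite h set11.
by rewrite !inE (negbTE vx) (negbTE vy) andbF.
Qed.

Lemma incid2_r (x y : 'I_n) : x != y -> incid R [set x; y] [set y] = (-1) ^+ (y < x)%N.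
Proof.
move=> xy; rewrite /incid big_mkcondr /= big_setU1 /= ?inE // big_set1.
have -> : [set x; y] :\ x = [set y].
  by apply/setP => u; rewrite !inE; case: eqVneq => // ->; rewrite (negbTE xy).
have -> : ([set x; y] :\ y == [set y]) = false.
  by apply/negbTE/negP => /eqP /setP /(_ y); rewrite !inE eqxx.
rewrite eqxx addr0; congr (_ ^+ _).
have [yx|xy'] := ltnP y x.
  suff -> : [set u in [set x; y] | (u < x)%N] = [set y] by rewrite cards1.
  apply/setP => u; rewrite !inE.
  have [->|ux] := eqVneq u x; first by rewrite ltnn (negbTE xy).
  by have [->|uy] := eqVneq u y; rewrite ?yx.
apply/eqP; rewrite cards_eq0; apply/eqP/setP => u; rewrite !inE.
have [->|ux] := eqVneq u x; first by rewrite ltnn.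
by have [->|uy] := eqVneq u y; rewrite ?ltnNge ?xy'.
Qed.

Lemma incid2_l (x y : 'I_n) : x != y ->
  incid R [set x; y] [set x] = - incid R [set x; y] [set y].
Proof.
move=> xy; rewrite [in LHS]setUC incid2_r 1?eq_sym // incid2_r //.
by case: ltngtP => // [|/val_inj eq_xy]; [rewrite expr0 expr1 opprK | rewrite eq_xy eqxx in xy].
Qed.

Lemma incid2_r_sqr (x y : 'I_n) : x != y ->
  incid R [set x; y] [set y] * incid R [set x; y] [set y] = 1.
Proof. by move=> xy; rewrite incid2_r // -exprMn mulrNN mulr1 expr1n. Qed.

Lemma inPm_incid (S T : {set 'I_n}) : inPm 0 (incid R S T).
Proof.
rewrite /incid; elim/big_ind: _ => [|p q|w _]; [exact: inPm0 | exact: inPmD |].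
by have := inPmXn #|[set u in S | (u < w)%N]| (inPmN (@inPmC R 1)); rewrite mul0n mpolyC1.
Qed.

End Incidence.

Section FaceCorrection.
Variables (R : realType) (n : nat) (pt : 'I_n -> R * R) (F : {set {set 'I_n}}).
Hypothesis tri : is_triangulation pt F.
Variable m : nat.
Implicit Types c h : {set 'I_n} -> poly2 R.

Lemma inPm_bd1 c v : (forall e, interior_edge F e -> inPm m (c e)) -> inPm m (bd1 F c v).
Proof.
move=> hc; rewrite /bd1; elim/big_ind: _ => [|p q|e he]; [exact: inPm0 | exact: inPmD |].
by have := inPmM (inPm_incid R e [set v]) (hc e he).
Qed.

Lemma bd1D c h v : bd1 F (fun e => c e + h e) v = bd1 F c v + bd1 F h v.
Proof. by rewrite /bd1 -big_split; apply: eq_bigr => e _; rewrite mulrDr. Qed.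

Lemma bd1_supp2 (e1 e2 : {set 'I_n}) (h1 h2 : poly2 R) v : e1 != e2 ->
  bd1 F (fun e => if e == e1 then h1 else if e == e2 then h2 else 0) v =
  (if interior_edge F e1 then incid R e1 [set v] * h1 else 0) +
  (if interior_edge F e2 then incid R e2 [set v] * h2 else 0).
Proof.
move=> e12; have e21 : e2 != e1 by rewrite eq_sym.
rewrite /bd1 big_mkcond (bigD1 e1) //= (bigD1 e2) /= ?e21 //.
rewrite [X in _ + (_ + X)]big1 => [|e /andP [/negbTE -> /negbTE ->]]; last first.
  by rewrite mulr0; case: ifP.
by rewrite addr0 eqxx (negbTE e21) eqxx.
Qed.

Variables (x y z : 'I_n).
Hypotheses (sF : [set x; y; z] \in F) (xy : x != y) (xz : x != z) (yz : y != z).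

Lemma face_correction c (uy uz : poly2 R) :
  (forall e, interior_edge F e -> inPm m (c e)) -> inPm m uy -> inPm m uz ->
  exists h, [/\ forall e, inPm m (h e),
    forall e : {set 'I_n}, ~~ (e \subset [set x; y; z]) -> h e = 0,
    forall v, v \notin [set x; y; z] -> bd1 F h v = 0 &
    [/\ interior_vertex F y -> bd1 F (fun e => c e + h e) y = uy,
        interior_vertex F z -> bd1 F (fun e => c e + h e) z = uz &
        interior_vertex F x ->
        bd1 F (fun e => c e + h e) x = bd1 F c x + (bd1 F c y - uy) + (bd1 F c z - uz)]].
Proof.
move=> hc huy huz; set e1 := [set x; y]; set e2 := [set x; z].
have e12 : e1 != e2.
  apply/negP => /eqP /setP /(_ y); rewrite !inE eqxx orbT /= => /esym /orP [].
    by rewrite eq_sym (negbTE xy).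
  by rewrite (negbTE yz).
have e1_sub : e1 \subset [set x; y; z] by rewrite subUset !sub1set !inE !eqxx ?orbT.
have e2_sub : e2 \subset [set x; y; z] by rewrite subUset !sub1set !inE !eqxx ?orbT.
have edge1 : is_edge F e1 by apply: (face_edge_is_edge sF); rewrite // cards2 xy.
have edge2 : is_edge F e2 by apply: (face_edge_is_edge sF); rewrite // cards2 xz.
have int1 v : interior_vertex F v -> v \in e1 -> interior_edge F e1.
  by move=> iv ve; apply: (interior_vertex_edge tri iv ve).
have int2 v : interior_vertex F v -> v \in e2 -> interior_edge F e2.
  by move=> iv ve; apply: (interior_vertex_edge tri iv ve).
set h1 := - (incid R e1 [set y] * (bd1 F c y - uy)).
set h2 := - (incid R e2 [set z] * (bd1 F c z - uz)).
exists (fun e => if e == e1 then h1 else if e == e2 then h2 else 0); split.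
- move=> e; case: ifP => _; [|case: ifP => _; last exact: inPm0]; apply: inPmN.
    exact: inPmM (inPm_incid R e1 [set y]) (inPmB (inPm_bd1 y hc) huy).
  exact: inPmM (inPm_incid R e2 [set z]) (inPmB (inPm_bd1 z hc) huz).
- by move=> e; case: eqP => [-> /negP //|_]; case: eqP => [-> /negP //|].
- move=> v; rewrite !inE => /norP [/norP [vx vy] vz].
  by rewrite bd1_supp2 // (incid2_notin R vx vy) (incid2_notin R vx vz) !mul0r !if_same addr0.
have yx : y != x by rewrite eq_sym.
have zx : z != x by rewrite eq_sym.
have zy : z != y by rewrite eq_sym.
split=> [iy|iz|ix]; rewrite bd1D bd1_supp2 //.
- rewrite (int1 y) ?inE ?eqxx ?orbT // (incid2_notin R yx yz) mul0r if_same addr0.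
  by rewrite /h1 mulrN mulrA incid2_r_sqr // mul1r; ring.
- rewrite (int2 z) ?inE ?eqxx ?orbT // (incid2_notin R zx zy) mul0r if_same add0r.
  by rewrite /h2 mulrN mulrA incid2_r_sqr // mul1r; ring.
- rewrite (int1 x) ?inE ?eqxx // (int2 x) ?inE ?eqxx // /h1 /h2 !incid2_l //.
  by rewrite !mulrN !mulNr !opprK !mulrA !incid2_r_sqr // !mul1r; ring.
Qed.

End FaceCorrection.

Section DropFace.
Variables (R : realType) (n : nat) (pt : 'I_n -> R * R) (F : {set {set 'I_n}}).
Variables (m : nat) (r : int) (sg : {set 'I_n}).
Implicit Types (c h : {set 'I_n} -> poly2 R) (p : poly2 R).

Local Notation Jr v := (Jvert pt F m (fun _ => r) v).
Local Notation Js v := (Jvert pt F m (drop_face r sg) v).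

Lemma Jedge_drop_face e p : Jedge pt m (fun _ => r) e p -> Jedge pt m (drop_face r sg) e p.
Proof.
move=> [hp [q pE]]; split => //; rewrite /drop_face; case: ifP => _; last by exists q.
by exists p; rewrite expr0 mul1r.
Qed.

Lemma Jedge_drop_face_sub (e : {set 'I_n}) p : e \subset sg -> inPm m p -> Jedge pt m (drop_face r sg) e p.
Proof. by move=> es hp; split => //; rewrite /drop_face es; exists p; rewrite expr0 mul1r. Qed.

Lemma Jvert_drop_face v p : Jr v p -> Js v p.
Proof.
move=> [hp [f [hf ep]]]; split => //; exists f; split => // e ie ve.
exact/Jedge_drop_face/hf.
Qed.

Lemma Jvert_drop_face_notin v p : v \notin sg -> Js v p -> Jr v p.
Proof.
move=> vs [hp [f [hf ep]]]; split => //; exists f; split => // e ie ve.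
have [hfe [q fe]] := hf e ie ve; split => //; exists q; move: fe; rewrite /drop_face.
by case: ifP => // /subsetP /(_ v ve); rewrite (negbTE vs).
Qed.

Lemma H0_vanishes_drop_face :
  H0_vanishes pt F m (fun _ => r) -> H0_vanishes pt F m (drop_face r sg).
Proof.
move=> H0 g hg; have [c [hc hJ]] := H0 g hg; exists c; split => // v iv.
exact/Jvert_drop_face/hJ.
Qed.

Definition cycle_correction c h : Prop :=
  [/\ forall e, inPm m (h e), forall e : {set 'I_n}, ~~ (e \subset sg) -> h e = 0 &
      forall v, interior_vertex F v -> Jr v (bd1 F (fun e => c e + h e) v)].

Lemma H1_vanishes_drop_face : H1_vanishes pt F m (fun _ => r) ->
  (forall c, (forall e, interior_edge F e -> inPm m (c e)) ->
    (forall v, interior_vertex F v -> Js v (bd1 F c v)) -> exists h, cycle_correction c h) ->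
  H1_vanishes pt F m (drop_face r sg).
Proof.
move=> H1 correct c hc hJ; have [h [hh h0 hJ']] := correct c hc hJ.
have [d [hd hde]] := H1 (fun e => c e + h e) (fun e ie => inPmD (hc e ie) (hh e)) hJ'.
exists d; split => // e ie; have [es|nes] := boolP (e \subset sg).
  apply: Jedge_drop_face_sub => //; have [hp _] := hde e ie.
  by rewrite -(addrK (h e) (c e)) addrAC; apply: inPmB.
by have := hde e ie; rewrite h0 // addr0; apply: Jedge_drop_face.
Qed.

End DropFace.

Section DropFaceCorrection.
Variables (R : realType) (n : nat) (pt : 'I_n -> R * R) (F : {set {set 'I_n}}).
Hypothesis tri : is_triangulation pt F.
Variables (m : nat) (r : int).
Let s := absz (r + 1).
Hypothesis slopes : forall v, interior_vertex F v -> (s.+1 <= nslopes pt F v)%N.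
Hypothesis hms : (3 * s < 2 * m + 3)%N.
Implicit Types (c : {set 'I_n} -> poly2 R) (p : poly2 R).

Local Notation Jr v := (Jvert pt F m (fun _ => r) v).

Lemma cycle_correction_of_face_values (x y z : 'I_n) c (uy uz : poly2 R) :
  [set x; y; z] \in F -> x != y -> x != z -> y != z ->
  (forall e, interior_edge F e -> inPm m (c e)) -> inPm m uy -> inPm m uz ->
  (forall v, interior_vertex F v -> Jvert pt F m (drop_face r [set x; y; z]) v (bd1 F c v)) ->
  (interior_vertex F y -> Jr y uy) -> (interior_vertex F z -> Jr z uz) ->
  (interior_vertex F x -> Jr x (bd1 F c x + (bd1 F c y - uy) + (bd1 F c z - uz))) ->
  exists h, cycle_correction pt F m r [set x; y; z] c h.
Proof.
move=> sF xy xz yz hc huy huz hJ Jy Jz Jx.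
have [h [hh h0 hout [ey ez ex]]] := face_correction tri sF xy xz yz hc huy huz.
exists h; split => // v iv.
have [vs|vs] := boolP (v \in [set x; y; z]); last first.
  by rewrite bd1D hout // addr0; apply: (Jvert_drop_face_notin vs); apply: hJ.
by move: vs iv; rewrite !inE => /orP [/orP []|] /eqP -> iv;
  [rewrite ex //; apply: Jx | rewrite ey //; apply: Jy | rewrite ez //; apply: Jz].
Qed.

Lemma drop_face_cycle_correction sg c : sg \in F ->
  (forall e, interior_edge F e -> inPm m (c e)) ->
  (forall v, interior_vertex F v -> Jvert pt F m (drop_face r sg) v (bd1 F c v)) ->
  exists h, cycle_correction pt F m r sg c h.
Proof.
move=> sF hc hJ; have [a [b [c' [ab ac bc esg]]]] := face_set3 tri sF.
have [ba ca cb] : [/\ b != a, c' != a & c' != b] by rewrite ![_ == a]eq_sym [c' == b]eq_sym.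
have J0 v : Jr v 0 by case: (Jvert_lin_closed pt F m (fun _ => r) v).
have bdry_case x y z : [set x; y; z] = sg -> x != y -> x != z -> y != z ->
    ~~ interior_vertex F x -> exists h, cycle_correction pt F m r sg c h.
  move=> exyz xy xz yz /negP ix; rewrite -exyz in sF hJ *.
  by apply: (cycle_correction_of_face_values sF xy xz yz hc (inPm0 _ _) (inPm0 _ _) hJ)
    => // /ix.
have [ia|] := boolP (interior_vertex F a); first last.
  by apply: (bdry_case a b c').
have [ib|] := boolP (interior_vertex F b); first last.
  by apply: (bdry_case b c' a) => //; rewrite set3_rot.
have [ic|] := boolP (interior_vertex F c'); first last.
  by apply: (bdry_case c' a b) => //; rewrite -set3_rot.
subst sg; set u := bd1 F c a + bd1 F c b + bd1 F c c'.
have hu : inPm m u by rewrite /u; do 2?apply: inPmD; apply: inPm_bd1.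
have [ua [ub [uc [Ja Jb Jc uE]]]] :=
  @Pm_face_ideal_sum _ _ _ _ tri m s (fun _ => r) (fun _ => erefl) hms _ _ _ sF ab ac bc ia ib ic
    (slopes ia) (slopes ib) (slopes ic) _ hu.
apply: (cycle_correction_of_face_values sF ab ac bc hc Jb.1 Jc.1 hJ) => // _.
have -> : bd1 F c a + (bd1 F c b - ub) + (bd1 F c c' - uc) = u - ub - uc by rewrite /u; ring.
by rewrite uE; congr Jvert: Ja; ring.
Qed.

End DropFaceCorrection.

Lemma lower_acyclic_drop_face (R : realType) (n : nat) (pt : 'I_n -> R * R)
    (F : {set {set 'I_n}}) (m : nat) (r : int) (sg : {set 'I_n}) :
  is_triangulation pt F -> -1 <= r -> lower_acyclic pt F m (fun _ => r) ->
  (forall v, interior_vertex F v -> r + 2 <= (nslopes pt F v)%:Z) ->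
  3 * r < 2 * m%:Z -> sg \in F -> lower_acyclic pt F m (drop_face r sg).
Proof.
move=> tri r_ge [H1 H0] hsl hm sF; split; last exact: H0_vanishes_drop_face.
have s_r : (absz (r + 1))%:Z = r + 1 by rewrite gez0_abs // -lerBlDr sub0r.
apply: (H1_vanishes_drop_face H1) => c hc hJ.
apply: (drop_face_cycle_correction tri) => //.
  by move=> v /hsl; rewrite -ltz_nat s_r; lia.
by rewrite -ltz_nat PoszD !PoszM s_r; lia.
Qed.

Theorem mainTheorem6 (R : realType) (n : nat) (pt : 'I_n -> R * R)
    (F : {set {set 'I_n}}) :
  is_triangulation pt F ->
  [/\ (forall (m : nat) (r : int), -1 <= r ->
        lower_acyclic pt F m (fun _ => r) ->
        (forall v, interior_vertex F v -> r + 2 <= (nslopes pt F v)%:Z) ->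
        3 * r < 2 * m%:Z ->
        forall s, s \in F -> lower_acyclic pt F m (drop_face r s)),
      (forall m : nat, (2 <= m)%N ->
        lower_acyclic pt F m (fun _ => 1) ->
        (forall v, interior_vertex F v -> (3 <= nslopes pt F v)%N) ->
        forall s, s \in F -> lower_acyclic pt F m (drop_face 1 s))
    & (forall m : nat, (4 <= m)%N ->
        lower_acyclic pt F m (fun _ => 2) ->
        (forall v, interior_vertex F v -> (4 <= nslopes pt F v)%N) ->
        forall s, s \in F -> lower_acyclic pt F m (drop_face 2 s))].
Proof.
move=> tri; split=> [m r r_ge la hsl hm s sF | m hm la hsl s sF | m hm la hsl s sF].
- exact: lower_acyclic_drop_face.
- by apply: lower_acyclic_drop_face => //; lia.
- by apply: lower_acyclic_drop_face => //; lia.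
Qed.
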